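(* Let $I=(\mathcal{M},[N],(u_i)_{i\in[N]})$ be a non-negative instance with $\mathcal{M}\ne\emptyset$ and let $(S_1,\ldots,S_N)$ be the allocation produced by the round-robin greedy protocol for $I$. Then for all $i\in[N]$, $$u_i(S_i)\le\Big(2-\frac1N\Big)\cdot mMS_{u_i}^N(\mathcal{M}).$$ Moreover the constant $2-\frac1N$ cannot be improved: for every $N\ge1$ there is a non-negative instance with $N$ agents for which the protocol yields an agent $i$ with $u_i(S_i)=\big(2-\frac1N\big)\,mMS_{u_i}^N(\mathcal{M})>0$.
   Context: A non-negative instance: finite item set $\mathcal{M}$, agents $[N]=\{1,\dots,N\}$, additive utilities $u_i$ with $u_i(j)\ge0$. $\Pi_N(\mathcal{M})$ is the set of ordered $N$-partitions of $\mathcal{M}$ (parts may be empty); $mMS_{u}^N(\mathcal{M}):=\min_{(T_1,\ldots,T_N)\in\Pi_N(\mathcal{M})}\max_{j} u(T_j)$. The round-robin greedy protocol: agents pick in the fixed order $1,2,\dots,N,1,2,\dots$; at her turn agent $i$ receives an item of lowest utility $u_i$ among the unallocated items (ties broken arbitrarily), until all items are allocated; $S_i$ is the set agent $i$ receives. *)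

From HB Require Import structures.
From mathcomp Require Import all_boot all_order all_algebra.
Set Implicit Arguments. Unset Strict Implicit. Unset Printing Implicit Defensive.
Import Order.TTheory GRing.Theory Num.Theory.
Local Open Scope ring_scope.

Definition util (R : realFieldType) (T : finType) (v : T -> R) (A : {set T}) : R :=
  \sum_(x in A) v x.

(* An ordered N-partition (parts may be empty) is encoded by the assignment
   f : T -> 'I_N, with parts T_j = [set x | f x == j]. *)
Definition part_cost (R : realFieldType) (T : finType) (N : nat)
    (v : T -> R) (f : {ffun T -> 'I_N}) : R :=
  \big[Num.max/0]_(j < N) util v [set x | f x == j].

(* The default value util v setT is attained by the partition putting all
   items in one part (when N >= 1), and is an upper bound of all part costs
   for non-negative v, so this is the true minimum in that setting. *)
Definition mMS (R : realFieldType) (T : finType) (v : T -> R) (N : nat) : R :=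
  \big[Num.min/util v setT]_(f : {ffun T -> 'I_N}) part_cost v f.

(* A run of the round-robin greedy protocol (with arbitrary tie-breaking)
   is recorded as the sequence s of items in the order they are picked:
   s lists every item exactly once, and the k-th pick (0-based) is made by
   agent k %% N (0-based), who receives an item of lowest utility among the
   still unallocated items (those at positions >= k). *)
Definition rr_exec (R : realFieldType) (T : finType) (N : nat)
    (u : 'I_N -> T -> R) (s : seq T) : Prop :=
  perm_eq s (enum T) /\
  forall (i : 'I_N) (k : nat) (x : T) (rest : seq T),
    drop k s = x :: rest -> (k %% N)%N = i ->
    forall y, y \in rest -> u i x <= u i y.

Definition rr_bundle (T : finType) (N : nat) (s : seq T) (i : 'I_N) : {set T} :=
  [set x | ((index x s) %% N == i)%N].

From HB Require Import structures.
From mathcomp Require Import all_boot all_order all_algebra.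
From mathcomp Require Import zify lra.
Set Implicit Arguments. Unset Strict Implicit. Unset Printing Implicit Defensive.
Import Order.TTheory GRing.Theory Num.Theory.
Local Open Scope ring_scope.

(* Let K be agent i's maximin share: every item is worth at most K to i and
   all items together at most N K.  Agent i picks at positions i, i + N, ...,
   and each pick is worth at most each of the N items from it on; so N times
   every pick but the last is paid for by its own block of N items, while
   N times the last pick exceeds that item by at most (N - 1) K.  Hence
   N u_i(S_i) <= u_i(M) + (N - 1) K <= (2 N - 1) K.
   Equality: N (N - 1) items of value 1 followed by one of value N, for which
   K = N and the first agent gets N - 1 ones and the heavy item. *)

Section StrideSums.
Variables (R : realFieldType) (N : nat) (a : R).
Hypotheses (N_gt0 : (0 < N)%N) (a_ge0 : 0 <= a).

Lemma big_nat_mod_small (i n : nat) (F : nat -> R) : (n <= N)%N ->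
  \sum_(0 <= k < n | (k %% N == i)%N) F k = if (i < n)%N then F i else 0.
Proof.
elim: n => [|n IH] le_nN; first by rewrite big_geq.
rewrite big_mkcond big_nat_recr //= -big_mkcond IH ?(ltnW le_nN) // modn_small //.
case: (ltngtP i n) => [lt_in|lt_ni|->]; rewrite ?addr0 ?add0r ltnS.
- by rewrite ltnW.
- by rewrite leqNgt lt_ni.
- by rewrite leqnn.
Qed.

Lemma sum_stride0_le (m : nat) (F : nat -> R) :
  (forall k, (k < m)%N -> 0 <= F k <= a) ->
  (forall k l, (N %| k)%N -> (k < l < m)%N -> F k <= F l) ->
  N%:R * \sum_(0 <= k < m | (N %| k)%N) F k
    <= \sum_(0 <= k < m) F k + N.-1%:R * a.
Proof.
elim/ltn_ind: m F => m IH F F_bnd F_mono.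
have sumF_ge0 j n : (n <= m)%N -> 0 <= \sum_(j <= k < n) F k.
  move=> le_nm; rewrite big_nat_cond; apply: sumr_ge0 => k /andP[/andP[_ lt_kn] _].
  by case/andP: (F_bnd k (leq_trans lt_kn le_nm)).
have N_split : N%:R = 1 + N.-1%:R :> R by rewrite -{1}(prednK N_gt0) -natr1 addrC.
case: (leqP m N) => [le_mN|lt_Nm].
  rewrite (big_nat_mod_small 0) //; case: ifP => [m_gt0|_].
    case/andP: (F_bnd 0%N m_gt0) => F0_ge0 F0_le.
    rewrite N_split mulrDl mul1r lerD ?ler_wpM2l //.
    by rewrite big_ltn // lerDl sumF_ge0.
  by rewrite mulr0 addr_ge0 ?mulr_ge0 // sumF_ge0.
(* The block [0, N) pays for the pick at 0; the rest is the same situation shifted by N. *)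
have shiftN P G : \sum_(N <= k < m | P k) G k
                  = \sum_(0 <= k < m - N | P (k + N)%N) G (k + N)%N.
  by rewrite -{1}(add0n N) big_addn.
rewrite (big_cat_nat _ (n := N)) ?(ltnW lt_Nm) //=.
rewrite [X in _ <= X + _](big_cat_nat _ (n := N)) ?(ltnW lt_Nm) //=.
have shift_dvd : \sum_(N <= k < m | (N %| k)%N) F k
                 = \sum_(0 <= k < m - N | (N %| k)%N) F (k + N)%N.
  by rewrite shiftN; apply: eq_bigl => k; rewrite (dvdn_addl k (dvdnn N)).
rewrite (big_nat_mod_small 0) // N_gt0 shift_dvd shiftN mulrDr -addrA.
apply: lerD; last first.
  apply: IH => [|k lt_k|k l dvd_k /andP[lt_kl lt_l]]; first lia.
    by apply: F_bnd; lia.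
  by apply: F_mono; rewrite ?dvdn_addl ?dvdnn //; lia.
have -> : N%:R * F 0%N = \sum_(0 <= k < N) F 0%N by rewrite sumr_const_nat mulr_natl subn0.
apply: ler_sum_nat => -[|k] lt_kN //.
by apply: F_mono; rewrite ?dvdn0 //; lia.
Qed.

Lemma sum_stride_le (i m : nat) (F : nat -> R) : (i < N)%N ->
  (forall k, (k < m)%N -> 0 <= F k <= a) ->
  (forall k l, (k %% N == i)%N -> (k < l < m)%N -> F k <= F l) ->
  N%:R * \sum_(0 <= k < m | (k %% N == i)%N) F k
    <= \sum_(0 <= k < m) F k + N.-1%:R * a.
Proof.
move=> lt_iN F_bnd F_mono.
have mod_shift k : ((k + i) %% N == i)%N = (N %| k)%N.
  by rewrite -{2}(modn_small lt_iN) -{2}(add0n i) eqn_modDr mod0n.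
have sumF_ge0 n : (n <= m)%N -> 0 <= \sum_(0 <= k < n) F k.
  move=> le_nm; rewrite big_nat_cond; apply: sumr_ge0 => k /andP[/andP[_ lt_kn] _].
  by case/andP: (F_bnd k (leq_trans lt_kn le_nm)).
case: (leqP m i) => [le_mi|lt_im].
  rewrite big_nat_mod_small ?(leq_trans le_mi (ltnW lt_iN)) // ltnNge le_mi.
  by rewrite mulr0 addr_ge0 ?mulr_ge0 // sumF_ge0.
have shift_i P G : \sum_(i <= k < m | P k) G k
                   = \sum_(0 <= k < m - i | P (k + i)%N) G (k + i)%N.
  by rewrite -{1}(add0n i) big_addn.
have shift_mod : \sum_(i <= k < m | (k %% N == i)%N) F k
                 = \sum_(0 <= k < m - i | (N %| k)%N) F (k + i)%N.
  by rewrite shift_i; apply: eq_bigl => k; rewrite mod_shift.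
rewrite (big_cat_nat _ (n := i)) ?(ltnW lt_im) //=.
rewrite [X in _ <= X + _](big_cat_nat _ (n := i)) ?(ltnW lt_im) //=.
rewrite big_nat_mod_small ?(ltnW lt_iN) // ltnn add0r shift_mod shift_i.
rewrite -addrA ler_wpDl ?sumF_ge0 ?(ltnW lt_im) //.
apply: sum_stride0_le => [k lt_k|k l dvd_k /andP[lt_kl lt_l]].
  by apply: F_bnd; lia.
by apply: F_mono; rewrite ?mod_shift //; lia.
Qed.

End StrideSums.

Section MaximinShare.
Variables (R : realFieldType) (T : finType) (v : T -> R).
Hypothesis v_ge0 : forall x, 0 <= v x.

Lemma mMS_le_part_cost N (f : {ffun T -> 'I_N}) : mMS v N <= part_cost v f.
Proof. exact: bigmin_le. Qed.

Lemma le_mMS N c : c <= util v setT ->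
  (forall f : {ffun T -> 'I_N}, c <= part_cost v f) -> c <= mMS v N.
Proof. by move=> c_le_util c_le_cost; apply: le_bigmin => // f _. Qed.

Lemma util_ge0 (A : {set T}) : 0 <= util v A.
Proof. exact: sumr_ge0. Qed.

Lemma le_util_mem (A : {set T}) x : x \in A -> v x <= util v A.
Proof. by move=> Ax; rewrite /util (bigD1 x) //= lerDl sumr_ge0. Qed.

Lemma util_part_le_cost N (f : {ffun T -> 'I_N}) j :
  util v [set x | f x == j] <= part_cost v f.
Proof. exact: (le_bigmax _ (fun j => util v [set x | f x == j])). Qed.

Lemma le_part_cost N (f : {ffun T -> 'I_N}) x : v x <= part_cost v f.
Proof. by apply: le_trans _ (util_part_le_cost f (f x)); rewrite le_util_mem ?inE. Qed.

Lemma util_le_part_cost N (f : {ffun T -> 'I_N}) :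
  util v setT <= N%:R * part_cost v f.
Proof.
have -> : N%:R * part_cost v f = \sum_(j < N) part_cost v f.
  by rewrite sumr_const card_ord mulr_natl.
rewrite /util (partition_big f xpredT) //=.
apply: ler_sum => j _; apply: le_trans _ (util_part_le_cost f j).
by rewrite /util (eq_bigl (fun x => x \in [set x | f x == j])) // => x; rewrite !inE.
Qed.

Lemma le_mMS_item N x : v x <= mMS v N.
Proof. by apply: le_mMS => [|f]; rewrite ?le_util_mem ?le_part_cost. Qed.

Lemma util_le_mMS N : (0 < N)%N -> util v setT <= N%:R * mMS v N.
Proof.
move=> N_gt0; have N_pos : 0 < N%:R :> R by rewrite ltr0n.
rewrite mulrC -ler_pdivrMr //; apply: le_mMS => [|f].
  by rewrite ler_pdivrMr // ler_peMr ?util_ge0 // ler1n.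
by rewrite ler_pdivrMr // mulrC util_le_part_cost.
Qed.

End MaximinShare.

Section RoundRobinRun.
Variables (R : realFieldType) (T : finType) (N : nat) (u : 'I_N -> T -> R).
Variables (s : seq T) (x0 : T).
Hypothesis rr_s : rr_exec u s.

Lemma util_by_position (v : T -> R) (A : {set T}) :
  util v A = \sum_(0 <= k < size s | nth x0 s k \in A) v (nth x0 s k).
Proof.
rewrite -(big_nth x0) (perm_big _ rr_s.1) big_enum_cond.
by apply: eq_bigl => x; rewrite inE.
Qed.

Lemma util_rr_bundle (v : T -> R) (i : 'I_N) :
  util v (rr_bundle s i) = \sum_(0 <= k < size s | (k %% N == i)%N) v (nth x0 s k).
Proof.
have s_uniq : uniq s by rewrite (perm_uniq rr_s.1) enum_uniq.
rewrite util_by_position big_nat_cond [RHS]big_nat_cond.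
apply: eq_bigl => k; case: (ltnP k (size s)) => [lt_ks|]; last by rewrite !andbF.
by rewrite inE index_uniq.
Qed.

Lemma util_setT_by_position (v : T -> R) :
  util v setT = \sum_(0 <= k < size s) v (nth x0 s k).
Proof. by rewrite util_by_position; apply: eq_bigl => k; rewrite in_setT. Qed.

Lemma rr_pick_le (i : 'I_N) k l : (k %% N == i)%N -> (k < l < size s)%N ->
  u i (nth x0 s k) <= u i (nth x0 s l).
Proof.
move=> k_i /andP[lt_kl lt_ls]; have lt_ks := ltn_trans lt_kl lt_ls.
apply: (rr_s.2 i k _ (drop k.+1 s)); first by rewrite (drop_nth x0).
  exact/eqP.
by rewrite -(subnKC lt_kl) -nth_drop mem_nth // size_drop ltn_sub2r // (leq_ltn_trans lt_kl).
Qed.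

End RoundRobinRun.

Lemma rr_bundle_le_mMS (R : realFieldType) (T : finType) (N : nat)
    (u : 'I_N -> T -> R) (s : seq T) (i : 'I_N) :
  (0 < N)%N -> (0 < #|T|)%N -> (forall i x, 0 <= u i x) -> rr_exec u s ->
  util (u i) (rr_bundle s i) <= (2 - N%:R^-1) * mMS (u i) N.
Proof.
move=> N_gt0 /card_gt0P[x0 _] u_ge0 rr_s.
set v := u i; set K := mMS v N; have N_pos : 0 < N%:R :> R by rewrite ltr0n.
have v_le_K x : v x <= K := le_mMS_item (u_ge0 i) N x.
have K_ge0 : 0 <= K := le_trans (u_ge0 i x0) (v_le_K x0).
have picks : N%:R * util v (rr_bundle s i) <= util v setT + N.-1%:R * K.
  rewrite (util_rr_bundle x0 rr_s) (util_setT_by_position x0 rr_s).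
  apply: sum_stride_le => // [k _|k l]; first by rewrite u_ge0 v_le_K.
  exact: rr_pick_le.
have total : util v setT <= N%:R * K := util_le_mMS (u_ge0 i) N_gt0.
rewrite -subn1 (natrB _ N_gt0) in picks.
by rewrite -(ler_pM2l N_pos) mulrA mulrBr mulfV ?gt_eqF //; lra.
Qed.

Section Tightness.
Variables (R : realFieldType) (M : nat).
Local Notation N := M.+1.
Local Notation item := 'I_(N * M).+1.

Definition heavy_last (x : item) : R := if x == ord_max then N%:R else 1.

Definition block (x : item) : 'I_N := inord (x %/ N).

Lemma heavy_last_ge1 x : 1 <= heavy_last x.
Proof. by rewrite /heavy_last; case: eqP; rewrite ?ler1n. Qed.

Lemma heavy_last_ge0 x : 0 <= heavy_last x.
Proof. exact: le_trans ler01 (heavy_last_ge1 x). Qed.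

Lemma rr_exec_heavy_last : rr_exec (fun _ : 'I_N => heavy_last) (enum item).
Proof.
split=> // i k x rest drop_k _ y y_rest.
rewrite {1}/heavy_last; case: eqP => [x_max|_]; last exact: heavy_last_ge1.
case: (ltnP k (N * M).+1) => [lt_k|ge_k]; last first.
  by rewrite drop_oversize ?size_enum_ord in drop_k.
move: drop_k y_rest; rewrite (drop_nth ord0) ?size_enum_ord // => -[x_k <-].
have k_max : k = (N * M)%N by rewrite -[k](nth_enum_ord ord0 lt_k) x_k x_max.
by rewrite k_max drop_oversize ?size_enum_ord.
Qed.

Lemma block_val x : block x = (x %/ N)%N :> nat.
Proof.
rewrite inordK // ltnS -[X in (_ <= X)%N](mulKn M (ltn0Sn M)) leq_div2r //.
by rewrite -ltnS.
Qed.

Lemma block_ord_max x : block x = block ord_max -> x = ord_max.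
Proof.
move/(congr1 (@nat_of_ord N)); rewrite !block_val /= mulKn // => x_blk.
apply/val_inj/eqP; rewrite /= eqn_leq -ltnS ltn_ord /=.
by rewrite -[X in (_ * X <= _)%N]x_blk mulnC leq_divM.
Qed.

Lemma card_block_le (j : 'I_N) : (#|[set x : item | block x == j]| <= N)%N.
Proof.
rewrite -[X in (_ <= X)%N]card_ord.
apply: (@leq_card_in _ _ (fun x : item => inord (x %% N) : 'I_N)) => x y.
rewrite !inE => /eqP x_j /eqP y_j /(congr1 val) /=; rewrite !inordK ?ltn_pmod // => xy_mod.
by apply: val_inj; rewrite /= (divn_eq x N) (divn_eq y N) -!block_val x_j y_j xy_mod.
Qed.

Lemma mMS_heavy_last : mMS heavy_last N = N%:R.
Proof.
apply/le_anti/andP; split; last first.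
  by have := le_mMS_item heavy_last_ge0 N ord_max; rewrite /heavy_last eqxx.
apply: le_trans (mMS_le_part_cost heavy_last [ffun x => block x]) _.
apply: bigmax_le => // j _.
have [j_max|j_max] := eqVneq j (block ord_max).
  have -> : [set x | [ffun x => block x] x == j] = [set ord_max].
    apply/setP => x; rewrite !inE ffunE j_max.
    by apply/eqP/eqP => [/block_ord_max|->].
  by rewrite /util big_set1 /heavy_last eqxx.
rewrite /util (eq_bigr (fun _ => 1)) => [|x]; last first.
  rewrite !inE ffunE /heavy_last => /eqP x_j; case: eqP => // x_max.
  by move: j_max; rewrite -x_j x_max eqxx.
rewrite sumr_const ler_nat (leq_trans _ (card_block_le j)) //.
by apply/subset_leq_card/subsetP => x; rewrite !inE ffunE.
Qed.

Lemma rr_bundle_heavy_last :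
  (2 - N%:R^-1) * N%:R <= util heavy_last (rr_bundle (enum item) (ord0 : 'I_N)).
Proof.
pose pick (k : 'I_N) : item := inord (k * N).
have pick_val k : pick k = (k * N)%N :> nat.
  by rewrite inordK // ltnS mulnC leq_mul2l -ltnS ltn_ord orbT.
have pick_inj : {in setT &, injective pick}.
  move=> k l _ _ /(congr1 (@nat_of_ord _)) /eqP.
  by rewrite !pick_val eqn_mul2r => /eqP/val_inj.
have picks_sub : pick @: setT \subset rr_bundle (enum item) (ord0 : 'I_N).
  by apply/subsetP => _ /imsetP[k _ ->]; rewrite inE index_enum_ord pick_val modnMl.
rewrite /util (big_setID (pick @: setT)) (setIidPr picks_sub) /= ler_wpDr ?sumr_ge0 //.
  by move=> x _; apply: heavy_last_ge0.
rewrite big_imset //= (eq_bigl xpredT) => [|k]; last by rewrite in_setT.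
rewrite big_ord_recr /=.
have -> : pick ord_max = ord_max by apply: val_inj; rewrite /= pick_val mulnC.
rewrite (eq_bigr (fun _ => 1)) => [|k _]; last first.
  rewrite /heavy_last; case: eqP => // /(congr1 val); rewrite /= pick_val mulnC.
  by move/eqP; rewrite eqn_mul2l /= => /eqP k_M; have := ltn_ord k; rewrite k_M ltnn.
rewrite sumr_const card_ord /heavy_last eqxx mulrBl mulVf ?pnatr_eq0 //.
rewrite -!natr1; lra.
Qed.

End Tightness.

Lemma rr_bundle_le_mMS_tight (R : realFieldType) (N : nat) : (0 < N)%N ->
  exists (T : finType) (u : 'I_N -> T -> R) (s : seq T) (i : 'I_N),
    [/\ (forall j x, 0 <= u j x), rr_exec u s,
        util (u i) (rr_bundle s i) = (2 - N%:R^-1) * mMS (u i) N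
      & 0 < mMS (u i) N].
Proof.
case: N => // M _.
have u_ge0 (j : 'I_M.+1) x : 0 <= @heavy_last R M x := heavy_last_ge0 R x.
have rr_run := rr_exec_heavy_last R M.
exists 'I_(M.+1 * M).+1, (fun _ => @heavy_last R M), (enum 'I_(M.+1 * M).+1), ord0.
split=> //; last by rewrite mMS_heavy_last ltr0Sn.
apply/le_anti; rewrite (rr_bundle_le_mMS _ _ _ u_ge0 rr_run) ?card_ord //=.
by rewrite mMS_heavy_last rr_bundle_heavy_last.
Qed.

Theorem proposition6 (R : realFieldType) :
  (forall (T : finType) (N : nat) (u : 'I_N -> T -> R) (s : seq T),
      (0 < N)%N -> (0 < #|T|)%N ->
      (forall i x, 0 <= u i x) ->
      rr_exec u s ->
      forall i : 'I_N,
        util (u i) (rr_bundle s i) <= (2 - N%:R^-1) * mMS (u i) N)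
  /\
  (forall N : nat, (0 < N)%N ->
     exists (T : finType) (u : 'I_N -> T -> R) (s : seq T) (i : 'I_N),
       [/\ (forall j x, 0 <= u j x),
           rr_exec u s,
           util (u i) (rr_bundle s i) = (2 - N%:R^-1) * mMS (u i) N
         & 0 < mMS (u i) N]).
Proof.
split; last exact: rr_bundle_le_mMS_tight.
by move=> T N u s i N_gt0 T_gt0 u_ge0 rr_s; apply: rr_bundle_le_mMS.
Qed.
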